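(* Let $p$ be a prime and let $\mathrm{Circ}(a_0,\ldots,a_{p-1})$ be a Hermitian circulant with universal perfect state transfer. Then $a_j\neq 0$ for $j=1,\ldots,p-1$.
   Context: $\mathrm{Circ}(a_0,\ldots,a_{n-1})$ denotes the $n\times n$ matrix $C$ with $C_{j,k}=a_{k-j}$ (indices mod $n$). A graph with Hermitian adjacency matrix $A$ has universal perfect state transfer if for every pair of vertices $v,w$ there is $t>0$ with $|\langle w|e^{-\mathtt{i} At}|v\rangle|=1$. *)

From HB Require Import structures.
From mathcomp Require Import all_boot all_order all_algebra.
From mathcomp Require Import all_classical all_reals.
From mathcomp Require Import topology normedtype sequences.
From mathcomp Require Import complex.

Set Implicit Arguments.
Unset Strict Implicit.
Unset Printing Implicit Defensive.

Import Order.TTheory GRing.Theory Num.Theory.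
Import numFieldNormedType.Exports.
Local Open Scope ring_scope.
Local Open Scope complex_scope.

Lemma circ_idx_lt (n : nat) (j k : 'I_n) : ((k + n - j) %% n < n)%N.
Proof. by rewrite ltn_pmod // (leq_ltn_trans (leq0n k) (ltn_ord k)). Qed.

Definition circ_idx (n : nat) (j k : 'I_n) : 'I_n := Ordinal (circ_idx_lt j k).

Definition circ (R : realType) (n : nat) (a : 'I_n -> R[i]) : 'M[R[i]]_n :=
  \matrix_(j < n, k < n) a (circ_idx j k).

Definition hermitian_mx (R : realType) (n : nat) (A : 'M[R[i]]_n) : Prop :=
  forall j k : 'I_n, A k j = (A j k)^*.

Definition expm_partial (R : realType) (n : nat) (A : 'M[R[i]]_n) (t : R)
    (N : nat) : 'M[R[i]]_n :=
  \sum_(m < N) (((- 'i * t%:C) ^+ m / (m`!)%:R) *: A ^+ m).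

Definition expm_iAt (R : realType) (n : nat) (A : 'M[R[i]]_n) (t : R)
    : 'M[R[i]]_n :=
  \matrix_(j < n, k < n)
    ((limn (fun N => complex.Re (expm_partial A t N j k)))
       +i* (limn (fun N => complex.Im (expm_partial A t N j k)))).

Definition pst (R : realType) (n : nat) (A : 'M[R[i]]_n) (v w : 'I_n) : Prop :=
  exists t : R, 0 < t /\ `| expm_iAt A t w v | = 1.

Definition universal_pst (R : realType) (n : nat) (A : 'M[R[i]]_n) : Prop :=
  forall v w : 'I_n, pst A v w.

From HB Require Import structures.
From mathcomp Require Import all_boot all_order all_algebra all_field.
From mathcomp Require Import all_classical all_reals.
From mathcomp Require Import topology normedtype sequences trigo complex.
From mathcomp Require Import ring lra zify.

(* The circulant Circ(a) is diagonalised by the characters of Z/p: with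
   w = exp(2 pi i / p), its eigenvalues lambda_k = sum_l a_l w^(l k) are real
   since Circ(a) is Hermitian, and
     e^{-i Circ(a) t}_{v,0} = 1/p sum_k w^(v k) e^{-i t lambda_k}.
   Perfect state transfer from 0 to v makes this sum of p terms of modulus 1/p
   have modulus 1, so all its terms share one phase:
   t (lambda_k - lambda_0) = (2 pi / p) c_k with integers c_k = v k (mod p).
   If a_j = 0 for some j <> 0, Fourier inversion gives
   sum_k (lambda_k - lambda_0) zeta^k = p a_j = 0 for the primitive p-th root
   of unity zeta = w^(-j), hence sum_k c_k zeta^k = 0.  Since
   1 + X + ... + X^(p-1) is the minimal polynomial of zeta over Q, all c_k are
   equal, contradicting c_0 = 0 and c_1 = v <> 0 (mod p). *)

Set Implicit Arguments.
Unset Strict Implicit.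
Unset Printing Implicit Defensive.

Import Order.TTheory GRing.Theory Num.Theory.
Import numFieldNormedType.Exports.
Local Open Scope classical_set_scope.
Local Open Scope ring_scope.
Local Open Scope complex_scope.

Lemma periodicz (R : realType) (f : R -> R) (T : R) :
  periodic f T -> forall (m : int) x, f (x + T * m%:~R) = f x.
Proof.
move=> fT [] n x; first by rewrite mulr_natr periodicn.
by rewrite NegzE mulrN -[in RHS](subrK (T * n.+1%:~R) x) mulr_natr periodicn.
Qed.

Section UnitCircle.
Variable R : realType.
Implicit Types x y : R.

Lemma pi2_gt0 : 0 < pi *+ 2 :> R.
Proof. by rewrite mulrn_wgt0 ?pi_gt0. Qed.

Lemma pi2_neq0 : pi *+ 2 != 0 :> R.
Proof. exact: lt0r_neq0 pi2_gt0. Qed.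

Lemma cos_eq1 x : cos x = 1 -> exists m : int, x = pi *+ 2 * m%:~R.
Proof.
move=> cx1.
(* Reduce [x] modulo [2 pi] into [[-pi, pi]], where [cos `|r| = 1] forces [r = 0]. *)
set m := Num.floor (x / (pi *+ 2) + 2^-1); exists m.
set r := x - pi *+ 2 * m%:~R.
have /andP[mle mgt] := floor_itv (x / (pi *+ 2) + 2^-1); rewrite -/m in mle mgt.
have r_le_pi : `|r| <= pi.
  move: mle mgt; rewrite ler_norml -(ler_pM2r pi2_gt0) -(ltr_pM2r pi2_gt0).
  by rewrite rmorphD !mulrDl divfK ?pi2_neq0 // rmorph1 mul1r /r; lra.
have : cos `|r| = cos 0.
  by rewrite cos_norm cos0 /r -(periodicz (@cosD2pi R) m) subrK.
move/cos_inj; rewrite !in_itv /= normr_ge0 r_le_pi lexx pi_ge0 => /(_ isT isT)/eqP.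
by rewrite normr_eq0 subr_eq0 => /eqP.
Qed.

Definition cis x : R[i] := cos x +i* sin x.

Lemma cisD x y : cis (x + y) = cis x * cis y.
Proof. by rewrite /cis cosD sinD; congr Complex; ring. Qed.

Lemma cis0 : cis 0 = 1.
Proof. by rewrite /cis cos0 sin0. Qed.

Lemma cisXn x k : cis x ^+ k = cis (x *+ k).
Proof. by elim: k => [|k IH]; rewrite ?cis0 // exprS IH mulrS cisD. Qed.

Lemma norm_cis x : `|cis x| = 1.
Proof. by rewrite normc_def /= cos2Dsin2 sqrtr1. Qed.

Lemma cis_eq1 x : cis x = 1 -> exists m : int, x = pi *+ 2 * m%:~R.
Proof. by case=> /cos_eq1. Qed.

End UnitCircle.

Section ExpSeries.
Variable R : realType.
Implicit Types y : R.

Definition expNi_partial y N : R[i] := \sum_(m < N) (- 'i * y%:C) ^+ m / (m`!)%:R.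

Lemma expNi_term y m :
  (- 'i * y%:C) ^+ m / (m`!)%:R = cos_coeff y m +i* - sin_coeff y m.
Proof.
have mi_even q : (- 'i : R[i]) ^+ q.*2 = ((-1) ^+ q)%:C.
  by rewrite -mul2n exprM sqrrN sqr_i rmorphXn /= rmorphN1.
rewrite /cos_coeff /sin_coeff exprMn -(rmorph_nat (real_complex R)) -fmorphV.
rewrite -rmorphXn -[m]odd_double_half; case: (odd m) => /=.
  rewrite exprS mi_even odd_double doubleK !mul0r !mul1r -!mulrA -!rmorphM /=.
  apply/eqP; rewrite eq_complex /=.
  by rewrite !(mul0r, mulr0, oppr0, subr0, add0r, mulN1r) !eqxx.
rewrite mi_even odd_double doubleK /= !mul0r !mul1r -!rmorphM /=.
by rewrite -exprnP oppr0.
Qed.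

Lemma expNi_partialE y N :
  expNi_partial y N = series (cos_coeff y) N +i* - series (sin_coeff y) N.
Proof.
rewrite /expNi_partial (eq_bigr _ (fun (m : 'I_N) _ => expNi_term y m)) /series /=.
by apply/eqP; rewrite eq_complex !raddf_sum /= !big_mkord sumrN !eqxx.
Qed.

Lemma cvg_Re_expNi y :
  (fun N => complex.Re (expNi_partial y N)) @ \oo --> complex.Re (cis (- y)).
Proof.
under eq_cvg do rewrite expNi_partialE.
by rewrite /cis /= cosN unlock; exact: is_cvg_series_cos_coeff.
Qed.

Lemma cvg_Im_expNi y :
  (fun N => complex.Im (expNi_partial y N)) @ \oo --> complex.Im (cis (- y)).
Proof.
under eq_cvg do rewrite expNi_partialE.
by rewrite /cis /= sinN unlock; apply: cvgN; exact: is_cvg_series_sin_coeff.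
Qed.

Lemma limn_Re_Im_lincomb (I : finType) (c : I -> R[i]) (u : I -> nat -> R[i])
    (l : I -> R[i]) (s : nat -> R[i]) :
  (forall N, s N = \sum_k c k * u k N) ->
  (forall k, (fun N => complex.Re (u k N)) @ \oo --> complex.Re (l k)) ->
  (forall k, (fun N => complex.Im (u k N)) @ \oo --> complex.Im (l k)) ->
  limn (fun N => complex.Re (s N)) +i* limn (fun N => complex.Im (s N)) =
  \sum_k c k * l k.
Proof.
move=> sE cvg_Re cvg_Im.
have ReM (x y : R[i]) :
  complex.Re (x * y) = complex.Re x * complex.Re y - complex.Im x * complex.Im y.
  by case: x; case: y.
have ImM (x y : R[i]) :
  complex.Im (x * y) = complex.Re x * complex.Im y + complex.Im x * complex.Re y.
  by case: x; case: y.
have cvg_sum (f : I -> nat -> R) (L : I -> R) : (forall k, f k @ \oo --> L k) ->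
    (fun N => \sum_k f k N) @ \oo --> \sum_k L k.
  by move=> cvgf; apply: cvg_big => //; exact: add_continuous.
apply/eqP; rewrite eq_complex /= !raddf_sum /=.
apply/andP; split; apply/eqP; apply: cvg_lim => //;
  under eq_cvg do rewrite sE raddf_sum /=; apply: cvg_sum => k.
- under eq_cvg do rewrite ReM; rewrite ReM.
  by apply: cvgB; apply: cvgMl_tmp.
- under eq_cvg do rewrite ImM; rewrite ImM.
  by apply: cvgD; apply: cvgMl_tmp.
Qed.

End ExpSeries.

Section PrimitiveRoots.
Variable F : idomainType.

Lemma sum_expr_prim_root n (z : F) i : n.-primitive_root z ->
  \sum_(k < n) z ^+ (i * k) = (n %| i)%N%:R * n%:R.
Proof.
move=> z_prim; under eq_bigr do rewrite exprM.
have [n_dvd_i | n_ndvd_i] := boolP (n %| i)%N.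
  move: n_dvd_i; rewrite (prim_order_dvd z_prim) => /eqP ->.
  by rewrite mul1r (eq_bigr _ (fun k _ => expr1n _ _)) sumr_const card_ord.
rewrite mul0r; apply/eqP; move: n_ndvd_i; rewrite (prim_order_dvd z_prim).
have := subrX1 (z ^+ i) n; rewrite -exprM mulnC exprM (prim_expr_order z_prim).
by rewrite expr1n subrr => /esym/eqP; rewrite mulf_eq0 subr_eq0 => /orP[->|].
Qed.

Lemma prime_prim_root p (z : F) : prime p -> z ^+ p = 1 -> z != 1 ->
  p.-primitive_root z.
Proof.
move=> p_prime zp1 z_neq1.
have [m m_prim m_dvd_p] := prim_order_exists (prime_gt0 p_prime) zp1.
have [m1 | m_neq1] := eqVneq m 1%N.
  by move: (prim_expr_order m_prim) z_neq1; rewrite m1 expr1 => ->; rewrite eqxx.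
by rewrite -(prime_nt_dvdP p_prime m_neq1 m_dvd_p).
Qed.

End PrimitiveRoots.

Lemma circ_idxE n (j k : 'I_n.+1) : circ_idx j k = k - j.
Proof.
by apply: val_inj; rewrite /= modnDmr addnBA // ltnW.
Qed.

Lemma circE (R : realType) n (a : 'I_n.+1 -> R[i]) (j k : 'I_n.+1) :
  circ a j k = a (k - j).
Proof. by rewrite mxE circ_idxE. Qed.

Section CirculantSpectrum.
Variables (R : realType) (n : nat) (z : R[i]) (a : 'I_n.+1 -> R[i]).
Hypothesis z_prim : n.+1.-primitive_root z.

Lemma prim_root_exprD (i j : 'I_n.+1) k :
  z ^+ ((i + j)%R * k) = z ^+ (i * k) * z ^+ (j * k).
Proof.
by rewrite -(prim_expr_mod z_prim) modnMml (prim_expr_mod z_prim) mulnDl exprD.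
Qed.

Lemma prim_root_exprN (i : 'I_n.+1) k : z ^+ ((- i)%R * k) = (z ^+ (i * k))^-1.
Proof.
by apply/esym/mulr1_eq; rewrite -prim_root_exprD addrN mul0n expr0.
Qed.

Definition circ_eigval (k : 'I_n.+1) : R[i] := \sum_l a l * z ^+ (l * k).

Lemma circ_mul_eigvec (w k : 'I_n.+1) :
  \sum_u circ a w u * z ^+ (u * k) = z ^+ (w * k) * circ_eigval k.
Proof.
rewrite (reindex_inj (addIr w)) /circ_eigval mulr_sumr; apply: eq_bigr => l _.
by rewrite circE addrK prim_root_exprD [_ * z ^+ (w * k)]mulrC mulrCA.
Qed.

Lemma sum_prim_root_div (i j : 'I_n.+1) :
  \sum_(k < n.+1) z ^+ (i * k) / z ^+ (j * k) = (i == j)%:R * n.+1%:R.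
Proof.
under eq_bigr do rewrite -prim_root_exprN -prim_root_exprD.
rewrite (sum_expr_prim_root _ z_prim) /dvdn modn_small //.
by rewrite -[(_ == 0)%N]/(i - j == 0) subr_eq0.
Qed.

Let n1_neq0 : n.+1%:R != 0 :> R[i]. Proof. by rewrite pnatr_eq0. Qed.

Lemma circ_exprE m (w v : 'I_n.+1) : (circ a ^+ m) w v =
  \sum_(k < n.+1) z ^+ (w * k) / z ^+ (v * k) / n.+1%:R * circ_eigval k ^+ m.
Proof.
elim: m w v => [|m IH] w v.
  under eq_bigr do rewrite expr0 mulr1.
  by rewrite expr0 -idmxE mxE -mulr_suml sum_prim_root_div mulfK.
rewrite exprS -mulmxE mxE; under eq_bigr do rewrite IH mulr_sumr.
rewrite exchange_big; apply: eq_bigr => k _.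
transitivity ((\sum_u circ a w u * z ^+ (u * k)) *
              ((z ^+ (v * k))^-1 / n.+1%:R * circ_eigval k ^+ m)).
  by rewrite mulr_suml; apply: eq_bigr => u _; ring.
by rewrite circ_mul_eigvec exprS; ring.
Qed.

Lemma sum_circ_eigval_div (j : 'I_n.+1) :
  \sum_(k < n.+1) circ_eigval k / z ^+ (j * k) = n.+1%:R * a j.
Proof.
rewrite /circ_eigval; under eq_bigr do rewrite mulr_suml.
rewrite exchange_big /=.
under eq_bigr do
  (under eq_bigr do rewrite -mulrA; rewrite -mulr_sumr sum_prim_root_div).
rewrite (bigD1 j) //= eqxx mul1r mulrC big1 ?addr0 // => l /negbTE ->.
by rewrite mul0r mulr0.
Qed.

Lemma norm_prim_root : `|z| = 1.
Proof.
apply/eqP; rewrite -(pexpr_eq1 (n := n.+1)) ?normr_ge0 //.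
by rewrite -normrX (prim_expr_order z_prim) normr1.
Qed.

Lemma conj_prim_root_expr k : (z ^+ k)^* = (z ^+ k)^-1.
Proof. by rewrite [RHS]invC_norm normrX norm_prim_root !expr1n invr1 mul1r. Qed.

Lemma sum_circ_eigval_sub_div (j : 'I_n.+1) (s : R[i]) : j != 0 -> a j = 0 ->
  \sum_(k < n.+1) (circ_eigval k - s) / z ^+ (j * k) = 0.
Proof.
move=> j_neq0 aj0; have sum_div0 : \sum_(k < n.+1) s / z ^+ (j * k) = 0.
  rewrite -mulr_sumr.
  under eq_bigr => k _ do rewrite -[_^-1]mul1r -(expr0 z) -(mul0n k).
  by rewrite (sum_prim_root_div 0 j) eq_sym (negbTE j_neq0) mul0r mulr0.
under eq_bigr do rewrite mulrBl.
by rewrite sumrB sum_div0 sum_circ_eigval_div aj0 mulr0 subr0.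
Qed.

Hypothesis a_herm : hermitian_mx (circ a).

Lemma conj_circ_eigval k : (circ_eigval k)^* = circ_eigval k.
Proof.
have conj_a l : (a l)^* = a (- l).
  by have := a_herm 0 l; rewrite !circE subr0 sub0r.
rewrite /circ_eigval rmorph_sum (reindex_inj oppr_inj); apply: eq_bigr => l _.
by rewrite rmorphM /= conj_a opprK conj_prim_root_expr prim_root_exprN invrK.
Qed.

Lemma circ_eigval_real k : circ_eigval k = (complex.Re (circ_eigval k))%:C.
Proof.
by case: (circ_eigval k) (conj_circ_eigval k) => x y [] y0; congr Complex; lra.
Qed.

Lemma expm_iAt_circ t (w v : 'I_n.+1) : expm_iAt (circ a) t w v =
  \sum_(k < n.+1)
    z ^+ (w * k) / z ^+ (v * k) / n.+1%:R * cis (- (t * complex.Re (circ_eigval k))).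
Proof.
set c := fun k : 'I_n.+1 => z ^+ (w * k) / z ^+ (v * k) / n.+1%:R.
set mu := fun k => t * complex.Re (circ_eigval k).
have partialE N : expm_partial (circ a) t N w v = \sum_k c k * expNi_partial (mu k) N.
  rewrite /expm_partial summxE; under eq_bigr do rewrite mxE circ_exprE mulr_sumr.
  rewrite exchange_big; apply: eq_bigr => k _.
  rewrite /expNi_partial mulr_sumr; apply: eq_bigr => m _.
  by rewrite /c /mu rmorphM /= -circ_eigval_real !exprMn; ring.
rewrite /expm_iAt mxE; apply: (limn_Re_Im_lincomb partialE) => k.
- exact: cvg_Re_expNi.
- exact: cvg_Im_expNi.
Qed.

End CirculantSpectrum.

Section PrimeCyclotomic.
Variable p : nat.
Hypothesis p_prime : prime p.

Definition cyclo_prime : {poly rat} := \poly_(i < p) 1.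

Lemma size_cyclo_prime : size cyclo_prime = p.
Proof. by rewrite size_poly_eq ?oner_eq0. Qed.

Lemma horner_cyclo_prime (K : numFieldType) (x : K) :
  (map_poly ratr cyclo_prime).[x] = \sum_(i < p) x ^+ i.
Proof.
rewrite (horner_coef_wide (n := p)) ?size_map_poly ?size_cyclo_prime //.
by apply: eq_bigr => i _; rewrite coef_map /= coef_poly ltn_ord rmorph1 mul1r.
Qed.

Lemma root_cyclo_prime (K : numFieldType) (x : K) :
  root (map_poly ratr cyclo_prime) x = p.-primitive_root x.
Proof.
rewrite /root horner_cyclo_prime; apply/eqP/idP => [sum0 | x_prim]; last first.
  under eq_bigr do rewrite -[i in x ^+ i]mul1n.
  by rewrite (sum_expr_prim_root _ x_prim) dvdn1 gtn_eqF ?prime_gt1 ?mul0r.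
apply: prime_prim_root => //.
  by apply/eqP; rewrite -subr_eq0 subrX1 sum0 mulr0.
apply/eqP => x1; move: sum0; rewrite x1 (eq_bigr _ (fun i _ => expr1n _ _)).
by rewrite sumr_const card_ord => /eqP; rewrite pnatr_eq0 gtn_eqF ?prime_gt0.
Qed.

Lemma cyclo_prime_neq0 : cyclo_prime != 0.
Proof. by rewrite -size_poly_eq0 size_cyclo_prime gtn_eqF ?prime_gt0. Qed.

Lemma cyclo_prime_dvdp (K : numFieldType) (z : K) (q : {poly rat}) :
  p.-primitive_root z -> root (map_poly ratr q) z -> cyclo_prime %| q.
Proof.
(* Irreducibility of 1 + X + ... + X^(p-1) over Q is only available through
   [minCpoly] in algC, so a root of gcd(q, cyclo_prime) is moved to algC. *)
move=> z_prim qz0; have [-> | q_neq0] := eqVneq q 0; first exact: dvdp0.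
set g := gcdp q cyclo_prime.
have g_gt1 : (1 < size g)%N.
  rewrite -(size_map_poly (ratr : {rmorphism rat -> K})) (root_size_gt1 _ (a := z)) //.
    by rewrite map_poly_eq0 gcdp_eq0 negb_and q_neq0.
  by rewrite gcdp_map root_gcd qz0 root_cyclo_prime.
have [w gw0] : exists w : algC, root (map_poly ratr g) w.
  by apply/closed_rootP; rewrite size_map_poly gtn_eqF.
have w_prim : p.-primitive_root w.
  by rewrite -root_cyclo_prime; apply: root_dvdp gw0; rewrite dvdp_map dvdp_gcdr.
have [r [minCw _] root_minC] := minCpolyP w.
have r_size : size r = p.
  rewrite -(size_map_poly (ratr : {rmorphism rat -> algC})) -minCw.
  rewrite (minCpoly_cyclotomic w_prim) size_cyclotomic totient_prime //.
  by rewrite prednK ?prime_gt0.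
have g_eqp : g %= cyclo_prime.
  rewrite -dvdp_size_eqp ?dvdp_gcdr // size_cyclo_prime eqn_leq.
  rewrite -{1}size_cyclo_prime dvdp_leq ?cyclo_prime_neq0 ?dvdp_gcdr //=.
  by rewrite -r_size dvdp_leq -?root_minC // gcdp_eq0 negb_and q_neq0.
by rewrite -(eqp_dvdl _ g_eqp) dvdp_gcdl.
Qed.

Lemma sum_prim_root_prime_eq0 (K : numFieldType) (z : K) (c : 'I_p -> int) :
  p.-primitive_root z -> \sum_(k < p) (c k)%:~R * z ^+ k = 0 -> forall k l, c k = c l.
Proof.
move=> z_prim sum0 k l.
pose q : {poly rat} := \poly_(i < p) (c (insubd k i))%:~R.
have q_coef (i : 'I_p) : q`_i = (c i)%:~R by rewrite coef_poly ltn_ord valKd.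
have /dvdpP [d q_eq] : cyclo_prime %| q.
  apply: (cyclo_prime_dvdp z_prim).
  rewrite /root (horner_coef_wide (n := p)) ?size_map_poly ?size_poly //.
  rewrite -[X in _ == X]sum0; apply/eqP; apply: eq_bigr => i _.
  by rewrite coef_map /= q_coef ratr_int.
have d_size : (size d <= 1)%N.
  have [-> | d_neq0] := eqVneq d 0; first by rewrite size_poly0.
  have := size_poly p (fun i => (c (insubd k i))%:~R : rat); rewrite -/q q_eq.
  rewrite size_mul ?cyclo_prime_neq0 // size_cyclo_prime -subn1.
  by have := prime_gt0 p_prime; move: (size d) => s; lia.
apply/eqP; rewrite -(eqr_int rat) -!q_coef q_eq (size1_polyC d_size) !coefCM.
by rewrite !coef_poly !ltn_ord.
Qed.

End PrimeCyclotomic.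

Section PerfectStateTransfer.
Variable R : realType.

Definition omega n : R[i] := cis (pi *+ 2 / n%:R).

Lemma omega_prim n : n.+1.-primitive_root (omega n.+1).
Proof.
have n1_neq0 : n.+1%:R != 0 :> R by rewrite pnatr_eq0.
have theta_n : pi *+ 2 / n.+1%:R *+ n.+1 = pi *+ 2 :> R.
  by rewrite -mulrnAr -[_^-1 *+ _]mulr_natr mulVf // mulr1.
have omega_n : omega n.+1 ^+ n.+1 = 1.
  by rewrite /omega cisXn theta_n /cis cos2pi sin2pi.
have [m m_prim m_dvd] := prim_order_exists (ltn0Sn n) omega_n.
suff n_dvd_m : (n.+1 %| m)%N.
  have /eqP m_eq : m == n.+1 by rewrite eqn_dvd m_dvd.
  by rewrite m_eq in m_prim.
have := prim_expr_order m_prim; rewrite /omega cisXn => /cis_eq1 [k].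
rewrite -mulrnAr => /(mulfI (@pi2_neq0 R)) /(congr1 ( *%R n.+1%:R)).
rewrite mulrnAr mulfV // => m_eq.
have /intr_inj : (m%:Z%:~R : R) = (n.+1%:Z * k)%:~R by rewrite intrM; exact: m_eq.
by move=> mk; apply/dvdnP; exists `|k|%N; lia.
Qed.

Lemma norm_sum_omega_cis_eq1 n (v : 'I_n.+1) (mu : 'I_n.+1 -> R) :
  `|\sum_(k < n.+1) omega n.+1 ^+ (v * k) / n.+1%:R * cis (- mu k)| = 1 ->
  exists m : 'I_n.+1 -> int, forall k,
    mu k - mu 0 = pi *+ 2 / n.+1%:R *+ (v * k) - pi *+ 2 * (m k)%:~R.
Proof.
set F := fun k : 'I_n.+1 => omega n.+1 ^+ (v * k) / n.+1%:R * cis (- mu k).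
move=> norm_sum.
have n1_neq0 : n.+1%:R != 0 :> R[i] by rewrite pnatr_eq0.
have normF k : `|F k| = n.+1%:R^-1.
  by rewrite /F !normrM normfV normrX norm_cis expr1n normr_nat norm_cis mulr1 div1r.
have norm_sumE : `|\sum_k F k| = \sum_k `|F k|.
  rewrite norm_sum (eq_bigr _ (fun k _ => normF k)) sumr_const card_ord.
  by rewrite -[_ *+ _]mulr_natr mulVf.
have [tau _ F_tau] := normC_sum_eq norm_sumE.
have F_eq (k : 'I_n.+1) : omega n.+1 ^+ (v * k) * cis (- mu k) = cis (- mu 0).
  have : F k = F 0 by rewrite (F_tau k isT) (F_tau 0 isT) !normF.
  rewrite /F muln0 expr0 mul1r mulrAC [RHS]mulrC.
  by move/(mulIf (invr_neq0 n1_neq0)).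
suff /choice [m m_eq] : forall k : 'I_n.+1, exists m : int,
    mu k - mu 0 = pi *+ 2 / n.+1%:R *+ (v * k) - pi *+ 2 * m%:~R by exists m.
move=> k; have [m m_eq] : exists m : int,
    pi *+ 2 / n.+1%:R *+ (v * k) - mu k + mu 0 = pi *+ 2 * m%:~R.
  by apply: cis_eq1; rewrite !cisD -cisXn F_eq -cisD addNr cis0.
by exists m; rewrite -m_eq; ring.
Qed.

Lemma pst_circ_phases n (a : 'I_n.+1 -> R[i]) (v : 'I_n.+1) :
  hermitian_mx (circ a) -> pst (circ a) 0 v ->
  exists (t : R) (m : 'I_n.+1 -> int), forall k,
    t%:C * (circ_eigval (omega n.+1) a k - circ_eigval (omega n.+1) a 0) =
    (pi *+ 2 / n.+1%:R)%:C * ((v * k)%N%:Z - n.+1%:Z * m k)%:~R.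
Proof.
move=> a_herm [t [_ pst_t]]; exists t.
have w_prim := omega_prim n; set w := omega n.+1 in w_prim pst_t *.
set mu := fun k => t * complex.Re (circ_eigval w a k).
have [m mu_eq] : exists m : 'I_n.+1 -> int, forall k,
    mu k - mu 0 = pi *+ 2 / n.+1%:R *+ (v * k) - pi *+ 2 * (m k)%:~R.
  apply: norm_sum_omega_cis_eq1; move: pst_t; rewrite (expm_iAt_circ w_prim a_herm).
  by under eq_bigr do rewrite mul0n expr0 divr1; exact: id.
exists m => k; rewrite (circ_eigval_real w_prim a_herm k).
rewrite (circ_eigval_real w_prim a_herm 0) -rmorphB.
rewrite -rmorphM -(rmorph_int (real_complex R)) -rmorphM /= mulrBr -/(mu k) -/(mu 0).
rewrite mu_eq intrB intrM; congr Complex.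
by field; rewrite nat1r pnatr_eq0.
Qed.

Lemma pst_circ_coef_neq0 n (a : 'I_n.+1 -> R[i]) (v j : 'I_n.+1) :
  prime n.+1 -> hermitian_mx (circ a) -> pst (circ a) 0 v -> v != 0 -> j != 0 ->
  a j != 0.
Proof.
move=> p_prime a_herm pst_v v_neq0 j_neq0; apply/eqP => aj0.
have [t [m phase]] := pst_circ_phases a_herm pst_v.
have w_prim := omega_prim n; set w := omega n.+1 in w_prim phase.
set zeta := (w ^+ j)^-1.
have zeta_prim : n.+1.-primitive_root zeta.
  apply: prime_prim_root => //.
    by rewrite exprVn -exprM mulnC exprM (prim_expr_order w_prim) expr1n invr1.
  by rewrite invr_eq1 -(prim_order_dvd w_prim) /dvdn modn_small.
set c := fun k : 'I_n.+1 => ((v * k)%N%:Z - n.+1%:Z * m k)%R.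
have sum_c : \sum_(k < n.+1) (c k)%:~R * zeta ^+ k = 0.
  have theta_neq0 : (pi *+ 2 / n.+1%:R)%:C != 0 :> R[i].
    by rewrite eq_complex /= negb_and mulf_neq0 ?invr_eq0 ?pnatr_eq0 ?pi2_neq0.
  apply: (mulfI theta_neq0); rewrite mulr0.
  transitivity (t%:C *
    \sum_(k < n.+1) (circ_eigval w a k - circ_eigval w a 0) / w ^+ (j * k)).
    rewrite !mulr_sumr; apply: eq_bigr => k _.
    by rewrite /c !mulrA -phase /zeta exprVn -exprM.
  by rewrite sum_circ_eigval_sub_div // mulr0.
move: (sum_prim_root_prime_eq0 p_prime zeta_prim sum_c 0 (Ordinal (prime_gt1 p_prime))).
rewrite /c /= muln0 muln1.
have v_gt0 : (0 < v)%N by rewrite lt0n.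
move: v_gt0 (ltn_ord v); move: (m 0) (m (Ordinal _)) (nat_of_ord v) => x y u.
by case: (lerP (y - x) 0) => ? ? ? ?; nia.
Qed.

End PerfectStateTransfer.

Theorem lemma4 (R : realType) (p : nat) (a : 'I_p -> R[i]) :
  prime p ->
  hermitian_mx (circ a) ->
  universal_pst (circ a) ->
  forall j : 'I_p, (0 < j)%N -> a j != 0.
Proof.
case: p a => [|n] a p_prime; first by [].
move=> a_herm a_upst j j_gt0.
have v_neq0 : Ordinal (prime_gt1 p_prime) != 0 by [].
apply: (pst_circ_coef_neq0 p_prime a_herm (a_upst 0 _) v_neq0).
by rewrite -lt0n.
Qed.
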